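(* Let $V=[n]$, let $\mathbb V=\{V_1,\dots,V_k\}$ be a partition of $V$ into nonempty classes, let $d:\mathbb V\to\mathbb N$, and let $D^*=(d_{ij})$ be a symmetric $k\times k$ matrix with entries in $\mathbb N\cup\{*\}$. If $\langle\mathbb V,d,D^*\rangle\neq\emptyset$, then there exists a balanced $\langle\mathbb V,d,D^*\rangle$ graph.
   Context: $\mathbb N$ denotes the nonnegative integers. $\langle\mathbb V,d,D^*\rangle$ is the set of simple graphs $G$ on $V$ such that every vertex of $V_i$ has degree $d(V_i)$, and for every pair $i\le j$ with $d_{ij}\neq *$, the number of edges of $G$ between $V_i$ and $V_j$ (with both endpoints in $V_i$ if $i=j$) is exactly $d_{ij}$; pairs with $d_{ij}=*$ are unconstrained. For $G\in\langle\mathbb V,d,D^*\rangle$ let $H$ be the spanning subgraph of $G$ consisting of the edges $uv$ of $G$ with $u\in V_i$, $v\in V_j$ and $d_{ij}\neq *$. $G$ is a balanced $\langle\mathbb V,d,D^*\rangle$ graph if $H$ satisfies the balanced degree invariant: for every $i$, $\max_{v\in V_i}\deg_H(v)-\min_{v\in V_i}\deg_H(v)\le 1$. *)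

From mathcomp Require Import all_boot.
Set Implicit Arguments. Unset Strict Implicit. Unset Printing Implicit Defensive.

(* The partition V = V_1 ∪ ... ∪ V_k into
   nonempty classes is given by a surjective class map cls : 'I_n -> 'I_k
   (V_i = cls^-1(i)).  The matrix D^*
   has entries in option nat, with None standing for '*'. *)

Definition simple_graph n (e : rel 'I_n) : Prop :=
  irreflexive e /\ symmetric e.

Definition deg n (e : rel 'I_n) (v : 'I_n) : nat := #|[set u | e v u]|.

Definition edges_between n k (cls : 'I_n -> 'I_k) (e : rel 'I_n) (i j : 'I_k) : nat :=
  #|[set p : 'I_n * 'I_n | [&& p.1 < p.2, e p.1 p.2 &
       ((cls p.1 == i) && (cls p.2 == j)) || ((cls p.1 == j) && (cls p.2 == i))]]|.

Definition in_VdD n k (cls : 'I_n -> 'I_k) (d : 'I_k -> nat)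
    (D : 'I_k -> 'I_k -> option nat) (e : rel 'I_n) : Prop :=
  simple_graph e /\
  (forall v : 'I_n, deg e v = d (cls v)) /\
  (forall i j : 'I_k, i <= j -> forall m, D i j = Some m -> edges_between cls e i j = m).

Definition H_rel n k (cls : 'I_n -> 'I_k) (D : 'I_k -> 'I_k -> option nat)
    (e : rel 'I_n) : rel 'I_n :=
  fun u v => e u v && (D (cls u) (cls v) != None).

Definition balanced_VdD n k (cls : 'I_n -> 'I_k) (d : 'I_k -> nat)
    (D : 'I_k -> 'I_k -> option nat) (e : rel 'I_n) : Prop :=
  in_VdD cls d D e /\
  (forall u v : 'I_n, cls u = cls v ->
     deg (H_rel cls D e) u <= (deg (H_rel cls D e) v).+1).

From mathcomp Require Import all_boot zify.
Set Implicit Arguments. Unset Strict Implicit. Unset Printing Implicit Defensive.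

(* If two vertices u, v of one class have H-degrees differing by at least 2, then,
   as deg u = deg v, v has at least two more *-edges than u.  So there are an
   H-neighbour w of u not adjacent to v and a *-neighbour x of v not adjacent to u.
   Replacing the edges uw, vx by vw, ux keeps every degree and, because u and v lie
   in the same class, every count d_ij, while moving one unit of H-degree from u to v.
   This strictly decreases the sum of the squared H-degrees, so a graph in
   <V, d, D*> minimising that sum is balanced. *)

Lemma card_set_sum (T : finType) (P : pred T) : #|[set z | P z]| = \sum_z P z.
Proof. by rewrite -sum1_card big_mkcond; apply: eq_bigr => z _; rewrite inE; case: (P z). Qed.

Lemma deg_sum n (r : rel 'I_n) (a : 'I_n) : deg r a = \sum_b r a b.
Proof. exact: card_set_sum. Qed.

Lemma sum_eq_muln (I : finType) (c : I) (F : I -> nat) : \sum_i (i == c) * F i = F c.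
Proof. by rewrite (bigD1 c) //= eqxx mul1n big1 ?addn0 // => i /negbTE ->. Qed.

Lemma deg_split n (r p : rel 'I_n) (a : 'I_n) :
  deg r a = deg (fun x y => r x y && p x y) a + deg (fun x y => r x y && ~~ p x y) a.
Proof. by rewrite !deg_sum -big_split; apply: eq_bigr => b _; case: (r a b); case: (p a b). Qed.

Lemma exists_nbr_notin n (r s : rel 'I_n) (a b : 'I_n) : (deg s b).+1 < deg r a ->
  exists2 c, r a c & ~~ s b c && (c != b).
Proof.
move=> lt_deg; have [c /and3P[rac nsbc cb] | none] :=
  pickP (fun c => [&& r a c, ~~ s b c & c != b]); first by exists c => //; apply/andP.
have sub : [set c | r a c] \subset b |: [set c | s b c].
  apply/subsetP => c; rewrite !inE => rac; move/negbT: (none c); rewrite rac /=.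
  by have [-> | _] := eqVneq c b; rewrite ?eqxx // andbT negbK orbC => ->.
move: (subset_leq_card sub) lt_deg; rewrite cardsU1 /deg.
by case: (b \notin _) => /=; lia.
Qed.

Lemma sum_sq_transfer (I : finType) (f g : I -> nat) (u v : I) : u != v ->
  (forall a, f a + (a == u) = g a + (a == v)) -> (g v).+1 < g u ->
  \sum_a f a ^ 2 < \sum_a g a ^ 2.
Proof.
move=> uv fg lt_vu; have vu : v != u by rewrite eq_sym.
rewrite [\sum_a f a ^ 2](bigD1 u) // [\sum_a g a ^ 2](bigD1 u) //.
rewrite (bigD1 v) 1?[\sum_(a | a != u) g a ^ 2](bigD1 v) //=.
rewrite (eq_bigr (fun a => g a ^ 2)); last first.
  by move=> a /andP[au av]; have := fg a; rewrite (negbTE au) (negbTE av) !addn0 => ->.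
move: (fg u) (fg v) lt_vu (\sum_(a | _) _); rewrite !eqxx (negbTE uv) (negbTE vu) /=; nia.
Qed.

Lemma nat_descent (T : Type) (P Q : T -> Prop) (f : T -> nat) :
  (forall x, P x -> Q x \/ exists2 y, P y & f y < f x) ->
  (exists x, P x) -> exists x, Q x.
Proof.
move=> step [x Px]; elim/ltn_ind: (f x) {-2}x (erefl (f x)) Px => m IH {}x fx Px.
have [Qx | [y Py lt_yx]] := step x Px; first by exists x.
by apply: (IH (f y) _ y); rewrite // -fx.
Qed.

Definition single_edge n (p q : 'I_n) : rel 'I_n :=
  fun a b => ((a == p) && (b == q)) || ((a == q) && (b == p)).

Lemma single_edge_sym n (p q : 'I_n) : symmetric (single_edge p q).
Proof. by move=> a b; rewrite /single_edge orbC; congr (_ || _); apply: andbC. Qed.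

Lemma single_edge_irr n (p q : 'I_n) : p != q -> irreflexive (single_edge p q).
Proof. by move=> pq a; apply: contraNF pq => /orP[] /andP[/eqP <- /eqP <-]. Qed.

Lemma single_edge_pairE n (p q a b : 'I_n) : p != q ->
  single_edge p q a b = ((a, b) == (p, q)) + ((a, b) == (q, p)) :> nat.
Proof.
move=> pq; rewrite /single_edge !xpair_eqE.
by have [-> | //] := eqVneq a p; rewrite eq_sym (negbTE pq) /= orbF addn0.
Qed.

Lemma single_edge_rel n (r : rel 'I_n) (p q a b : 'I_n) :
  symmetric r -> single_edge p q a b -> r a b = r p q.
Proof. by move=> r_sym /orP[] /andP[/eqP -> /eqP ->]. Qed.

Lemma sum_single_edge_row n (p q a : 'I_n) (W : 'I_n -> 'I_n -> nat) : p != q ->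
  \sum_b single_edge p q a b * W a b = (a == p) * W p q + (a == q) * W q p.
Proof.
move=> pq; under eq_bigr do rewrite single_edge_pairE // !xpair_eqE !mulnDl.
rewrite big_split /=; under eq_bigr do rewrite -mulnb -mulnA.
under [X in _ + X]eq_bigr do rewrite -mulnb -mulnA.
rewrite -!big_distrr /= !sum_eq_muln.
have [-> | ap] := eqVneq a p; first by rewrite (negbTE pq).
by have [-> | _] := eqVneq a q.
Qed.

Lemma sum_single_edge_pairs n (p q : 'I_n) (W : 'I_n -> 'I_n -> nat) : p != q ->
  \sum_(z : 'I_n * 'I_n) single_edge p q z.1 z.2 * W z.1 z.2 = W p q + W q p.
Proof.
move=> pq; under eq_bigr do rewrite single_edge_pairE // -surjective_pairing mulnDl.
by rewrite big_split /= !(sum_eq_muln _ (fun z : 'I_n * 'I_n => W z.1 z.2)).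
Qed.

Lemma edges_between_sum n k (cls : 'I_n -> 'I_k) (r : rel 'I_n) (i j : 'I_k) :
  edges_between cls r i j
  = \sum_(z : 'I_n * 'I_n) r z.1 z.2 * ((z.1 < z.2) && single_edge i j (cls z.1) (cls z.2)).
Proof.
rewrite /edges_between card_set_sum; apply: eq_bigr => z _.
by rewrite mulnb andbCA.
Qed.

Lemma deg_H_rel_sum n k (cls : 'I_n -> 'I_k) (D : 'I_k -> 'I_k -> option nat)
    (r : rel 'I_n) (a : 'I_n) :
  deg (H_rel cls D r) a = \sum_b r a b * (D (cls a) (cls b) != None).
Proof. by rewrite deg_sum; apply: eq_bigr => b _; rewrite mulnb. Qed.

Definition switch n (e : rel 'I_n) (u v w x : 'I_n) : rel 'I_n :=
  fun a b => [&& e a b, ~~ single_edge u w a b & ~~ single_edge v x a b]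
             || single_edge v w a b || single_edge u x a b.

Section Switch.

Variables (n : nat) (e : rel 'I_n) (u v w x : 'I_n).
Hypotheses (e_simple : simple_graph e) (euw : e u w) (evx : e v x)
  (nevw : ~~ e v w) (neux : ~~ e u x) (uv : u != v) (wv : w != v) (xu : x != u).

Let e_irr : irreflexive e := e_simple.1.
Let e_sym : symmetric e := e_simple.2.
Let uw : u != w. Proof. by apply: contraTneq euw => <-; rewrite e_irr. Qed.
Let vx : v != x. Proof. by apply: contraTneq evx => <-; rewrite e_irr. Qed.
Let vw : v != w. Proof. by rewrite eq_sym. Qed.
Let ux : u != x. Proof. by rewrite eq_sym. Qed.

Lemma switch_count a b :
  switch e u v w x a b + single_edge u w a b + single_edge v x a b
  = e a b + single_edge v w a b + single_edge u x a b.
Proof.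
have in_e p q : e p q -> single_edge p q a b ==> e a b.
  by move=> epq; apply/implyP => /(single_edge_rel e_sym) ->.
have out_e p q : ~~ e p q -> single_edge p q a b ==> ~~ e a b.
  by move=> epq; apply/implyP => /(single_edge_rel e_sym) ->.
have disj_s1 : single_edge u w a b ==> ~~ single_edge v x a b.
  apply/implyP => /(single_edge_rel (@single_edge_sym _ v x)) ->.
  by rewrite /single_edge (negbTE uv) (negbTE wv) andbF.
have disj_s2 : single_edge v w a b ==> ~~ single_edge u x a b.
  apply/implyP => /(single_edge_rel (@single_edge_sym _ u x)) ->.
  by rewrite /single_edge eq_sym (negbTE uv) eq_sym (negbTE vx).
move: (in_e _ _ euw) (in_e _ _ evx) (out_e _ _ nevw) (out_e _ _ neux) disj_s1 disj_s2.
rewrite /switch; case: (e a b); case: (single_edge u w a b); case: (single_edge v x a b);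
  by case: (single_edge v w a b); case: (single_edge u x a b).
Qed.

Lemma switch_simple : simple_graph (switch e u v w x).
Proof.
split=> [a | a b]; first by rewrite /switch e_irr !single_edge_irr.
by rewrite /switch e_sym !(single_edge_sym _ _ a).
Qed.

Lemma sum_switch_row (a : 'I_n) (W : 'I_n -> 'I_n -> nat) :
  \sum_b switch e u v w x a b * W a b
    + ((a == u) * W u w + (a == w) * W w u) + ((a == v) * W v x + (a == x) * W x v)
  = \sum_b e a b * W a b
    + ((a == v) * W v w + (a == w) * W w v) + ((a == u) * W u x + (a == x) * W x u).
Proof.
rewrite -!sum_single_edge_row // -!big_split; apply: eq_bigr => b _.
by rewrite /= -!mulnDl switch_count.
Qed.

Lemma sum_switch_pairs (W : 'I_n -> 'I_n -> nat) :
  \sum_(z : 'I_n * 'I_n) switch e u v w x z.1 z.2 * W z.1 z.2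
    + (W u w + W w u) + (W v x + W x v)
  = \sum_(z : 'I_n * 'I_n) e z.1 z.2 * W z.1 z.2 + (W v w + W w v) + (W u x + W x u).
Proof.
rewrite -!sum_single_edge_pairs // -!big_split; apply: eq_bigr => z _.
by rewrite /= -!mulnDl switch_count.
Qed.

Lemma deg_switch (a : 'I_n) : deg (switch e u v w x) a = deg e a.
Proof.
have sum_muln1 (r : rel 'I_n) : \sum_b r a b * 1 = \sum_b r a b.
  by apply: eq_bigr => b _; rewrite muln1.
have := sum_switch_row a (fun _ _ => 1); rewrite !sum_muln1 !muln1 -!deg_sum.
move: (deg _ a) (deg e a) (a == u : nat) (a == v : nat) (a == w : nat) (a == x : nat).
by clear; lia.
Qed.

Variables (k : nat) (cls : 'I_n -> 'I_k).
Hypothesis cuv : cls u = cls v.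

Lemma edges_between_switch (i j : 'I_k) :
  edges_between cls (switch e u v w x) i j = edges_between cls e i j.
Proof.
pose W (p q : 'I_n) : nat := (p < q) && single_edge i j (cls p) (cls q).
have W_pair p q : p != q -> W p q + W q p = single_edge i j (cls p) (cls q).
  rewrite /W single_edge_sym neq_ltn.
  by case: ltngtP => //= _ _; case: (single_edge _ _ _ _).
by have := sum_switch_pairs W; rewrite -!edges_between_sum !W_pair // cuv => /addIn /addIn.
Qed.

Lemma in_VdD_switch (d : 'I_k -> nat) (D : 'I_k -> 'I_k -> option nat) :
  in_VdD cls d D e -> in_VdD cls d D (switch e u v w x).
Proof.
case=> _ [deg_e edges_e]; split; first exact: switch_simple.
split=> [a | i j ij m Dij]; first by rewrite deg_switch.
by rewrite edges_between_switch; apply: edges_e.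
Qed.

Lemma deg_H_rel_switch (D : 'I_k -> 'I_k -> option nat) (a : 'I_n) :
  (forall i j, D i j = D j i) -> D (cls u) (cls w) != None -> D (cls v) (cls x) = None ->
  deg (H_rel cls D (switch e u v w x)) a + (a == u) = deg (H_rel cls D e) a + (a == v).
Proof.
move=> D_sym Duw Dvx.
have := sum_switch_row a (fun p q => D (cls p) (cls q) != None).
rewrite cuv in Duw.
rewrite -!deg_H_rel_sum cuv [D (cls w) _]D_sym [D (cls x) _]D_sym Dvx Duw.
by rewrite /= !muln1 !muln0 !addn0 !addnA => /addIn.
Qed.

End Switch.

Definition H_potential n k (cls : 'I_n -> 'I_k) (D : 'I_k -> 'I_k -> option nat)
    (e : rel 'I_n) : nat :=
  \sum_a deg (H_rel cls D e) a ^ 2.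

Lemma H_potential_decrease n k (cls : 'I_n -> 'I_k) (d : 'I_k -> nat)
    (D : 'I_k -> 'I_k -> option nat) (e : rel 'I_n) (u v : 'I_n) :
  (forall i j, D i j = D j i) -> in_VdD cls d D e -> cls u = cls v ->
  (deg (H_rel cls D e) v).+1 < deg (H_rel cls D e) u ->
  exists2 e', in_VdD cls d D e' & H_potential cls D e' < H_potential cls D e.
Proof.
move=> D_sym e_VdD cuv lt_vu; have [e_simple [deg_e _]] := e_VdD.
have uv : u != v by apply: contraTneq lt_vu => ->; rewrite ltnNge leqnSn.
have [w /andP[euw Duw] /andP[nHvw wv]] := exists_nbr_notin lt_vu.
have nevw : ~~ e v w by apply: contra nHvw => evw; rewrite /H_rel evw -cuv.
pose star : rel 'I_n := fun a b => e a b && ~~ (D (cls a) (cls b) != None).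
have split_deg a : deg e a = deg (H_rel cls D e) a + deg star a by exact: deg_split.
have lt_star : (deg star u).+1 < deg star v.
  move: (split_deg u) (split_deg v) lt_vu; rewrite !deg_e cuv.
  move: (d _) (deg (H_rel cls D e) u) (deg (H_rel cls D e) v) (deg star u) (deg star v).
  by clear; lia.
have [x /andP[evx /negbNE/eqP Dvx] /andP[nsux xu]] := exists_nbr_notin lt_star.
have neux : ~~ e u x by apply: contra nsux => eux; rewrite /star eux cuv Dvx.
exists (switch e u v w x); first exact: in_VdD_switch.
apply: (sum_sq_transfer uv) lt_vu => a; exact: deg_H_rel_switch.
Qed.

Theorem lemma1 (n k : nat) (cls : 'I_n -> 'I_k) (d : 'I_k -> nat)
    (D : 'I_k -> 'I_k -> option nat) :
  (forall i : 'I_k, exists v : 'I_n, cls v = i) ->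
  (forall i j : 'I_k, D i j = D j i) ->
  (exists e : rel 'I_n, in_VdD cls d D e) ->
  exists e : rel 'I_n, balanced_VdD cls d D e.
Proof.
(* The classes need not be nonempty for this argument. *)
move=> _ D_sym; apply: (nat_descent (f := H_potential cls D)) => e e_VdD.
pose degH := deg (H_rel cls D e).
have [balanced | ] :=
  boolP [forall u, forall v, (cls u == cls v) ==> (degH u <= (degH v).+1)].
  left; split=> // u v cuv.
  by move/forallP/(_ u)/forallP/(_ v)/implyP: balanced; apply; apply/eqP.
move/forallPn=> [u /forallPn[v]]; rewrite negb_imply -ltnNge => /andP[/eqP cuv lt_vu].
by right; apply: H_potential_decrease lt_vu.
Qed.
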